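(* Let $s\ge 3$ and let $\lambda$ be an $(s,s+1,s+2)$-core partition of maximum size. Then there exist integers $1\le i\le s-1$ and $0\le j\le\lfloor (s-i+1)/2\rfloor$ such that $\lambda=\lambda_{i,j}$.
   Context: An $(s,s+1,s+2)$-core is a partition with no hook length divisible by $s$, $s+1$ or $s+2$. The $\beta$-set of a partition is the set of hook lengths in its first column; a partition is uniquely determined by its $\beta$-set, and for a finite set $\{h_1>h_2>\cdots>h_m\}$ of positive integers the unique partition with this $\beta$-set is $(h_1-(m-1),h_2-(m-2),\ldots,h_{m-1}-1,h_m)$. For $s\ge 3$, $1\le i\le s-1$, define $\beta_{i,0}=\bigcup_{k\ge 0}\{i+1+k(s+2),\ldots,(k+1)s-1\}$ (empty intervals omitted), and for $1\le j\le\lfloor(s-i+1)/2\rfloor$ define $\beta_{i,j}=\beta_{i,0}\cup\{i+p(s+2): 0\le p\le j-1\}$. Let $\lambda_{i,j}$ be the unique partition with $\beta(\lambda_{i,j})=\beta_{i,j}$ (each $\lambda_{i,j}$ is an $(s,s+1,s+2)$-core). *)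

From mathcomp Require Import all_boot.
Set Implicit Arguments. Unset Strict Implicit. Unset Printing Implicit Defensive.

Definition is_partition (la : seq nat) : bool :=
  sorted geq la && all (fun x => 0 < x) la.

Definition psize (la : seq nat) : nat := sumn la.

(* length of column c (0-indexed): number of rows longer than c *)
Definition conj_part (la : seq nat) (c : nat) : nat := count (fun x => c < x) la.

(* hook length of the cell in row r, column c (0-indexed), for a cell of la
   (r < size la, c < la_r): arm + leg + 1 = (la_r - c) + (la'_c - r) - 1 *)
Definition hook (la : seq nat) (r c : nat) : nat :=
  (nth 0 la r - c) + (conj_part la c - r) - 1.

Definition is_core (t : nat) (la : seq nat) : bool :=
  all (fun r => all (fun c => ~~ (t %| hook la r c)) (iota 0 (nth 0 la r)))
      (iota 0 (size la)).

Definition is_sss_core (s : nat) (la : seq nat) : bool :=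
  [&& is_core s la, is_core s.+1 la & is_core s.+2 la].

(* membership in beta_{i,j}:
   beta_{i,0} = U_{k>=0} {i+1+k(s+2), ..., (k+1)s-1}
   beta_{i,j} = beta_{i,0} U {i + p(s+2) : 0 <= p <= j-1}.
   (An h in the k-th interval forces k <= h, so bounding k by h is exact.) *)
Definition in_beta (s i j h : nat) : bool :=
  has (fun k => (i + 1 + k * (s + 2) <= h) && (h <= (k + 1) * s - 1) && (0 < h))
      (iota 0 h.+1)
  || has (fun p => h == i + p * (s + 2)) (iota 0 j).

(* beta_{i,j} as a strictly decreasing list h_1 > h_2 > ... > h_m.  All its
   elements are positive and below (s+2)^2 when 1 <= i <= s-1 and
   j <= (s-i+1)/2, so this enumerates the whole set. *)
Definition beta_list (s i j : nat) : seq nat :=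
  rev [seq h <- iota 1 ((s + 2) ^ 2) | in_beta s i j h].

(* the unique partition with beta-set {h_1 > ... > h_m}:
   (h_1-(m-1), h_2-(m-2), ..., h_{m-1}-1, h_m) *)
Definition partition_of_beta (l : seq nat) : seq nat :=
  [seq nth 0 l k - (size l - 1 - k) | k <- iota 0 (size l)].

Definition lambda_ij (s i j : nat) : seq nat := partition_of_beta (beta_list s i j).

From mathcomp Require Import all_boot zify.
Set Implicit Arguments. Unset Strict Implicit. Unset Printing Implicit Defensive.

(* A partition is determined by its beta-set B; it is a t-core iff B is closed
   under h |-> h - t, and its size is sum B - C(#B, 2).  Write h = k (s+2) + r
   with r < s+2 ("level" k, "residue" r).  Closure under s, s+1 and s+2 says that
   an element on level k+1 with residue r forces residues r, r+1, r+2 on level k;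
   hence level k only uses residues in (0, s-2k-1], and a nonempty level k+1 has
   at least two elements fewer than level k.  Pushing every level to the top of
   its range keeps B closed and does not decrease the sum, so for a core of
   maximum size level k is an interval [b_k, s-2k-1] with b nondecreasing.
   Moving the bottom element of a level up to a missing place, or adding a
   missing element, would produce a larger core; hence b only takes the values
   i = b_0 and i + 1, and the first empty level cannot be extended.  This is the
   shape of beta_{i,j}, where j counts the levels starting at i. *)

(* The first-column hook lengths of [la], in decreasing order. *)
Definition beta (la : seq nat) : seq nat :=
  [seq nth 0 la r + (size la - 1 - r) | r <- iota 0 (size la)].

Lemma gtn_trans : transitive gtn.
Proof. exact: rev_trans ltn_trans. Qed.

Lemma gtn_irr : irreflexive gtn.
Proof. exact: ltnn. Qed.

Lemma size_beta la : size (beta la) = size la.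
Proof. by rewrite size_map size_iota. Qed.

Lemma nth_beta la r : r < size la -> nth 0 (beta la) r = nth 0 la r + (size la - 1 - r).
Proof. by move=> hr; rewrite (nth_map 0) ?size_iota // nth_iota. Qed.

Lemma mem_beta la v : (v \in beta la) = has (fun r => v == nth 0 (beta la) r) (iota 0 (size la)).
Proof.
apply/idP/hasP => [/(nthP 0) [r hr <-] | [r]].
  by exists r; rewrite // mem_iota -(size_beta la).
by rewrite mem_iota => /andP [_ hr] /eqP ->; apply: mem_nth; rewrite size_beta.
Qed.

Lemma partition_of_betaK la : partition_of_beta (beta la) = la.
Proof.
apply: (@eq_from_nth _ 0); rewrite /partition_of_beta size_map size_iota size_beta //.
move=> r hr; rewrite (nth_map 0) ?size_iota ?size_beta // nth_iota // nth_beta //.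
by rewrite add0n addnK.
Qed.

Lemma sumn_beta la : sumn (beta la) = psize la + 'C(size la, 2).
Proof.
have sumn_nth (l : seq nat) : sumn l = \sum_(0 <= r < size l) nth 0 l r.
  by rewrite sumnE -{1}(mkseq_nth 0 l) /mkseq big_map /index_iota subn0.
rewrite /psize (sumn_nth la) (sumn_nth (beta la)) size_beta -bin2_sum.
rewrite [X in _ = _ + X]big_nat_rev /= -big_split /=.
by apply: eq_big_nat => r /andP [_ hr]; rewrite nth_beta //; lia.
Qed.

Section Partition.
Variable la : seq nat.
Hypothesis la_part : is_partition la.
Local Notation n := (size la).

Lemma partition_nth_le p q : p <= q -> q < n -> nth 0 la q <= nth 0 la p.
Proof.
case/andP: la_part => sorted_la _ pq qla.
apply: (sorted_leq_nth (rev_trans leq_trans) leqnn 0 sorted_la) => //.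
by rewrite inE; apply: leq_ltn_trans qla.
Qed.

Lemma partition_nth_gt0 r : r < n -> 0 < nth 0 la r.
Proof. by case/andP: la_part => _ /all_nthP; apply. Qed.

Lemma beta_sorted : sorted gtn (beta la).
Proof.
apply/(sortedP 0) => r; rewrite size_beta => hr.
rewrite /= !nth_beta //; last by lia.
by have := partition_nth_le (leqnSn r) hr; lia.
Qed.

Lemma beta_gt0 v : v \in beta la -> 0 < v.
Proof.
rewrite mem_beta => /hasP [r]; rewrite mem_iota add0n => /andP [_ hr] /eqP ->.
by rewrite nth_beta //; have := partition_nth_gt0 hr; lia.
Qed.

Lemma conj_partP c :
  [/\ conj_part la c <= n &
    forall r, r < n -> (c < nth 0 la r) = (r < conj_part la c)].
Proof.
set q := find (fun y => y <= c) la.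
have hq : q <= size la by apply: find_size.
have long_rows r : r < size la -> (c < nth 0 la r) = (r < q).
  move=> hr; case: (ltnP r q) => hrq.
    by have := before_find 0 hrq; rewrite ltnNge => ->.
  have hhas : has (fun y => y <= c) la by rewrite has_find; apply: leq_ltn_trans hr.
  apply/negbTE; rewrite -leqNgt.
  by apply: leq_trans (partition_nth_le hrq hr) _; apply: (nth_find 0 hhas).
suff -> : conj_part la c = q by [].
rewrite /conj_part -(cat_take_drop q la) count_cat.
have -> : count (fun x => c < x) (take q la) = q.
  apply/eqP; rewrite -[X in _ == X](size_takel hq) -all_count; apply/(all_nthP 0) => r.
  by rewrite size_takel // => hr; rewrite nth_take // long_rows //; apply: leq_trans hq.
suff -> : count (fun x => c < x) (drop q la) = 0 by rewrite addn0.
apply/eqP; rewrite -leqn0 leqNgt -has_count; apply/(has_nthP 0) => -[r].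
rewrite size_drop => hr; rewrite nth_drop long_rows ?ltnNge ?leq_addr //; lia.
Qed.

Lemma conj_part_eq c q : q <= n -> (forall r, r < n -> (c < nth 0 la r) = (r < q)) ->
  conj_part la c = q.
Proof.
move=> qn long_rows; have [cn conjP] := conj_partP c.
case: (ltngtP (conj_part la c) q) => // ineq.
  by have := long_rows _ (leq_trans ineq qn); rewrite conjP ?ltnn ?ineq //; lia.
by have := long_rows _ (leq_trans ineq cn); rewrite conjP ?ltnn ?ineq //; lia.
Qed.

(* The hooks of row [r] are the differences [nth 0 (beta la) r - x] with [x]
   a non-element of [beta la]; column [c] corresponds to [x = c + n - conj_part la c]. *)
Lemma hook_beta r c : r < n -> c < nth 0 la r ->
  exists x, [/\ x \notin beta la, x < nth 0 (beta la) r & hook la r c = nth 0 (beta la) r - x].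
Proof.
move=> rn cr; set x := c + n - conj_part la c; exists x.
have [qn conjP] := conj_partP c.
have rq : r < conj_part la c by rewrite -conjP.
split.
- rewrite mem_beta; apply/hasP => -[p]; rewrite mem_iota /= => pn /eqP.
  by rewrite nth_beta // /x; have := conjP p pn; case: (ltnP p (conj_part la c)); lia.
- by rewrite nth_beta // /x; lia.
- by rewrite /hook nth_beta // /x; lia.
Qed.

Lemma beta_hook r x : r < n -> x < nth 0 (beta la) r -> x \notin beta la ->
  exists2 c, c < nth 0 la r & hook la r c = nth 0 (beta la) r - x.
Proof.
move=> rn xr xB.
have la_le p q : p <= q -> q < n -> nth 0 la q <= nth 0 la p := @partition_nth_le p q.
set q := find (fun b => b < x) (beta la).
have qn : q <= n by rewrite -(size_beta la); apply: find_size.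
have above p : p < q -> x < nth 0 (beta la) p.
  move=> pq; have /negbT := before_find 0 pq; rewrite -leqNgt leq_eqVlt => /orP [/eqP E|//].
  by case/negP: xB; rewrite E mem_nth // size_beta (leq_trans pq).
have below : q < n -> nth 0 (beta la) q < x.
  move=> qn'; have hasx : has (fun b => b < x) (beta la) by rewrite has_find size_beta.
  exact: (nth_find 0 hasx).
have rq : r < q.
  rewrite ltnNge; apply/negP => qr; have := below (leq_ltn_trans qr rn).
  by have := la_le q r qr rn; move: xr; rewrite !nth_beta ?(leq_ltn_trans qr) //; lia.
have nxq : n <= x + q.
  case: (ltnP q n) => [qn'|]; last lia.
  have := below qn'; have := partition_nth_gt0 qn'; rewrite nth_beta //; lia.
set c := x + q - n.
have long_rows p : p < n -> (c < nth 0 la p) = (p < q).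
  move=> pn; case: (ltnP p q) => pq.
    have := above q.-1 (ltac:(lia)); rewrite nth_beta; last by lia.
    have := la_le p q.-1 (ltac:(lia)) (ltac:(lia)); rewrite /c; lia.
  have := below (leq_ltn_trans pq pn); rewrite nth_beta; last by lia.
  have := la_le q p pq pn; rewrite /c; lia.
have cr : c < nth 0 la r by rewrite long_rows.
exists c => //; rewrite /hook (conj_part_eq qn long_rows) nth_beta //.
by move: cr; rewrite /c; lia.
Qed.

End Partition.

Definition sub_closed (t : nat) (B : pred nat) :=
  forall h, B h -> t <= h -> t < h /\ B (h - t).

Lemma sub_closed_iter t B k h : sub_closed t B -> B h -> k * t <= h -> B (h - k * t).
Proof.
move=> tB; elim: k h => [|k IH] h hB hk; first by rewrite subn0.
have [_] := tB (h - k * t) (IH h hB (leq_trans (leq_mul (leqnSn k) (leqnn t)) hk)) (ltac:(lia)).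
by rewrite mulSnr subnDA.
Qed.

Lemma is_coreP t la :
  reflect (forall r c, r < size la -> c < nth 0 la r -> ~~ (t %| hook la r c)) (is_core t la).
Proof.
apply: (iffP allP) => [core r c rn cr | core r].
  by move: (core r); rewrite mem_iota => /(_ rn) /allP /(_ c); rewrite mem_iota; apply.
by rewrite mem_iota => rn; apply/allP => c; rewrite mem_iota; apply: core.
Qed.

Lemma core_beta_closed t la : is_partition la -> is_core t la -> sub_closed t (mem (beta la)).
Proof.
move=> la_part /is_coreP core h hB th; have h_gt0 := beta_gt0 la_part hB.
move/(nthP 0): hB; rewrite size_beta => -[r rn hr].
case: (boolP ((t < h) && (h - t \in beta la))) => [/andP [] // | bad]; exfalso.
have t_gt0 : 0 < t.
  by rewrite lt0n; apply: contra bad => /eqP ->; rewrite subn0 h_gt0 -hr mem_nth ?size_beta.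
have xB : h - t \notin beta la.
  case: (ltnP t h) bad => //= th' _; have -> : h - t = 0 by lia.
  by apply/negP => /(beta_gt0 la_part).
have xr : h - t < nth 0 (beta la) r by rewrite hr; lia.
have [c cr hook_eq] := beta_hook la_part rn xr xB.
by have := core r c rn cr; rewrite hook_eq hr subKn // dvdnn.
Qed.

Lemma beta_closed_core t la : is_partition la -> sub_closed t (mem (beta la)) -> is_core t la.
Proof.
move=> la_part tB; apply/is_coreP => r c rn cr; apply/negP => /dvdnP [k hk].
have [x [xB xr hook_eq]] := hook_beta la_part rn cr.
have rB : nth 0 (beta la) r \in beta la by rewrite mem_nth ?size_beta.
have := sub_closed_iter (k := k) tB rB; rewrite -hk hook_eq subKn ?(ltnW xr) //.
by move=> /(_ (leq_subr _ _)); apply/negP.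
Qed.

Lemma sorted_gtn_nth_gap (l : seq nat) p q : sorted gtn l -> p <= q -> q < size l ->
  nth 0 l q + (q - p) <= nth 0 l p.
Proof.
move=> /(sortedP 0) l_sorted pq; elim: q pq => [|q IH] pq ql; first by have -> : p = 0; lia.
case: (ltnP p q.+1) => pq'; last by have -> : p = q.+1; lia.
by have := IH (ltnSE pq') (ltnW ql); have /= := l_sorted q ql; lia.
Qed.

Section PartitionOfBeta.
Variable l : seq nat.
Hypotheses (l_sorted : sorted gtn l) (l_gt0 : all (fun x => 0 < x) l).
Local Notation m := (size l).

Lemma nth_partition_of_beta p : p < m -> nth 0 (partition_of_beta l) p = nth 0 l p - (m - 1 - p).
Proof. by move=> pm; rewrite /partition_of_beta (nth_map 0) ?size_iota // nth_iota. Qed.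

Lemma size_partition_of_beta : size (partition_of_beta l) = m.
Proof. by rewrite /partition_of_beta size_map size_iota. Qed.

Lemma size_sub_leq_nth p : p < m -> m - p <= nth 0 l p.
Proof.
move=> pm; have pm' : p <= m.-1 by lia.
have := sorted_gtn_nth_gap l_sorted pm' (ltac:(lia) : m.-1 < m).
by move/all_nthP: l_gt0 => /(_ 0 m.-1 (ltac:(lia))); lia.
Qed.

Lemma partition_of_beta_partition : is_partition (partition_of_beta l).
Proof.
have gap := sorted_gtn_nth_gap l_sorted.
apply/andP; split.
  apply/(sortedP 0) => p; rewrite size_partition_of_beta => pm.
  by rewrite !nth_partition_of_beta //; [have := gap p p.+1 (leqnSn p) pm; rewrite /=; lia | lia].
apply/(all_nthP 0) => p; rewrite size_partition_of_beta => pm.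
by rewrite nth_partition_of_beta //; have := size_sub_leq_nth pm; lia.
Qed.

Lemma beta_partition_of_beta : beta (partition_of_beta l) = l.
Proof.
apply: (@eq_from_nth _ 0); rewrite size_beta size_partition_of_beta // => p pm.
rewrite nth_beta size_partition_of_beta // nth_partition_of_beta //.
by have := size_sub_leq_nth pm; lia.
Qed.

End PartitionOfBeta.

Lemma big_nat_add1 (a : pred nat) y M (f : nat -> nat) : y < M -> ~~ a y ->
  \sum_(0 <= v < M) (a v || (v == y)) * f v = \sum_(0 <= v < M) a v * f v + f y.
Proof.
move=> yM ay; rewrite (bigD1_seq y) ?mem_index_iota ?iota_uniq //= eqxx orbT mul1n addnC.
rewrite [X in _ = X + _](bigD1_seq y) ?mem_index_iota ?iota_uniq //= (negbTE ay) mul0n add0n.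
by congr (_ + _); apply: eq_bigr => v /negbTE ->; rewrite orbF.
Qed.

Lemma big_nat_count_add1 (a : pred nat) y M : y < M -> ~~ a y ->
  \sum_(0 <= v < M) (a v || (v == y)) = \sum_(0 <= v < M) a v + 1.
Proof.
move=> yM ay; have := big_nat_add1 (fun=> 1) yM ay.
by under eq_bigr do rewrite muln1; under [in RHS]eq_bigr do rewrite muln1.
Qed.

Lemma residue_sum_bound M w (P : pred nat) : w < M -> (forall r, r < M -> P r -> 0 < r <= w) ->
  forall c, \sum_(0 <= r < M) P r = c ->
  [/\ c <= w, \sum_(0 <= r < M) P r * r + 'C(c, 2) <= c * w &
   \sum_(0 <= r < M) P r * r + 'C(c, 2) = c * w ->
     forall r, r < M -> P r = (w.+1 - c <= r <= w)].
Proof.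
elim: w P => [|w IH] P wM Pw c Pc.
  have P0 r : r < M -> P r = false by move=> rM; apply/negP => /(Pw r rM); lia.
  have sum0 (f : nat -> nat) : \sum_(0 <= r < M) P r * f r = 0.
    by rewrite big1_seq // => r /andP [_]; rewrite mem_index_iota => /andP [_ /P0 ->].
  have c0 : c = 0 by have := sum0 (fun=> 1); under eq_bigr do rewrite muln1; rewrite Pc.
  by rewrite c0 sum0; split=> // _ r /P0 ->; lia.
case: (boolP (P w.+1)) => Pw1; last first.
  have Pw' r : r < M -> P r -> 0 < r <= w.
    move=> rM Pr; have := Pw r rM Pr.
    by case: (eqVneq r w.+1) Pr => [-> | ]; rewrite ?(negbTE Pw1); lia.
  have [cw bound eq_case] := IH P (ltnW wM) Pw' c Pc.
  split; [lia | move: bound; nia | move=> E].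
  have c0 : c = 0 by move: bound E; nia.
  by move=> r rM; rewrite (eq_case (ltac:(move: bound E; nia)) r rM) c0; lia.
set P' := fun r => P r && (r != w.+1).
have P'w r : r < M -> P' r -> 0 < r <= w by move=> rM /andP [/(Pw r rM)]; lia.
have PE r : P r = P' r || (r == w.+1).
  by rewrite /P'; case: eqVneq => [->|]; rewrite ?Pw1 ?andbT ?orbF.
have P'w1 : ~~ P' w.+1 by rewrite /P' eqxx andbF.
have [c' P'c] : exists c', \sum_(0 <= r < M) P' r = c' by eexists.
have cE : c = c'.+1.
  by rewrite -Pc -P'c -addn1 -(big_nat_count_add1 wM P'w1); apply: eq_bigr => r _; rewrite PE.
have sumE : \sum_(0 <= r < M) P r * r = \sum_(0 <= r < M) P' r * r + w.+1.
  by rewrite -(big_nat_add1 id wM P'w1); apply: eq_bigr => r _; rewrite PE.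
have [c'w bound eq_case] := IH P' (ltnW wM) P'w c' P'c.
rewrite sumE cE binS bin1; split; [lia | move: bound; nia | move=> E r rM].
rewrite PE (eq_case (ltac:(move: bound E; nia)) r rM); lia.
Qed.

Lemma interval_sums M w c : c <= w -> w < M ->
  \sum_(0 <= r < M) (w.+1 - c <= r <= w) = c /\
  \sum_(0 <= r < M) (w.+1 - c <= r <= w) * r + 'C(c, 2) = c * w.
Proof.
move=> cw wM; elim: c cw => [|c IH] cw.
  by rewrite !big1 // => r _; case: leqP => //=; lia.
have [count_c sum_c] := IH (ltnW cw).
have E r : (w.+1 - c.+1 <= r <= w) = (w.+1 - c <= r <= w) || (r == w - c) by lia.
have new : ~~ (w.+1 - c <= w - c <= w) by lia.
have wcM : w - c < M by lia.
split; under eq_bigr do rewrite E; first by rewrite big_nat_count_add1 // count_c addn1.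
by rewrite big_nat_add1 // binS bin1; move: sum_c; nia.
Qed.

Section SssClosed.
Variable s : nat.
Local Notation W := s.+2.

(* Closure under subtracting s, s+1 and s+2 (see [sss_closedP]): removing them
   from [h + W] leaves [h + 2], [h + 1] and [h]. *)
Definition sss_closed (B : pred nat) :=
  [/\ ~~ B 0, ~~ B s, ~~ B s.+1 & forall h d, d <= 2 -> B (h + W) -> B (h + d)].

Lemma sss_closedP B : sss_closed B <->
  [/\ ~~ B 0, sub_closed s B, sub_closed s.+1 B & sub_closed s.+2 B].
Proof.
split=> [[B0 Bs Bs1 shift] | [B0 Cs Cs1 Cs2]].
  have closed t : s <= t <= W -> sub_closed t B.
    move=> st h hB th; case: (ltnP h W) => hW.
      have /orP [] : (h == s) || (h == s.+1) by lia.
        by move/eqP=> hs; move: hB; rewrite hs (negbTE Bs).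
      by move/eqP=> hs; move: hB; rewrite hs (negbTE Bs1).
    have := shift (h - W) (W - t) (ltac:(lia)); rewrite subnK // => /(_ hB) hd.
    have -> : h - t = h - W + (W - t) by lia.
    split=> //; rewrite ltn_neqAle th andbT.
    by apply: contraNneq B0 => ht; move: hd; have -> : h - W + (W - t) = 0 by lia.
  by split=> //; apply: closed; lia.
split=> //.
- by apply/negP => hB; have [] := Cs s hB (leqnn s); rewrite ltnn.
- by apply/negP => hB; have [] := Cs1 s.+1 hB (leqnn _); rewrite ltnn.
- move=> h d d2 hB.
  have Ct : sub_closed (W - d) B.
    by case: d d2 => [|[|[|]]] // _; rewrite ?subn0 ?subn1 ?subn2.
  have [_] := Ct (h + W) hB (ltac:(lia)).
  by have -> : h + W - (W - d) = h + d by lia.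
Qed.

(* [k * W + r] with [r < W] lies on level [k] with residue [r]; in a closed set
   the residues on level [k] lie in [(0, top k]] ([level_residue]). *)
Definition top k := s - (2 * k).+1.

Lemma level_eq k r k' r' : r < W -> r' < W -> k * W + r = k' * W + r' -> k = k' /\ r = r'.
Proof.
move=> rW r'W E; split.
  by have := congr1 (divn^~ W) E; rewrite /= !divnMDl // !divn_small // !addn0.
by have := congr1 (modn^~ W) E; rewrite /= !modnMDl !modn_small.
Qed.

Lemma level_shift B k r d : sss_closed B -> d <= 2 -> B (k.+1 * W + r) -> B (k * W + (r + d)).
Proof. by case=> _ _ _ shift d2; rewrite addnA mulSnr addnAC; apply: shift. Qed.

Lemma in_beta_level i j k r : i < W -> r < W ->
  in_beta s i j (k * W + r) = (i < r <= top k) || ((r == i) && (k < j)).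
Proof.
move=> iW rW; rewrite /in_beta addn2; congr (_ || _).
  apply/hasP/idP => [[k' _ /andP [/andP [lo hi] _]] | /andP [ir r_top]].
    have r'W : k * W + r - k' * W < W by move: lo hi; rewrite mulnDl mul1n !mulnS; lia.
    have E : k * W + r = k' * W + (k * W + r - k' * W) by move: lo; lia.
    have [kk' _] := level_eq rW r'W E.
    by move: lo hi; rewrite -kk' /top mulnDl mul1n !mulnS; lia.
  exists k; first by rewrite mem_iota add0n ltnS (leq_trans _ (leq_addr _ _)) ?leq_pmulr.
  by rewrite mulnDl mul1n !mulnS; move: r_top; rewrite /top; lia.
apply/hasP/andP => [[p] | [/eqP -> kj]]; last by exists k; rewrite ?mem_iota // addnC.
rewrite mem_iota add0n => /andP [_ pj] /eqP hp.
have E : k * W + r = p * W + i by rewrite hp addnC.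
by have [-> ->] := level_eq rW iW E; rewrite eqxx.
Qed.

(* Every closed set lies in [[0, W * W)] ([sss_closed_bound]). *)
Definition bsum (B : pred nat) := \sum_(0 <= v < W * W) B v * v.

Definition bcount (B : pred nat) := \sum_(0 <= v < W * W) B v.

Definition blist (B : pred nat) := rev [seq v <- iota 0 (W * W) | B v].

Lemma blist_sorted B : sorted gtn (blist B).
Proof.
rewrite /blist rev_sorted; apply: sorted_filter; first exact: ltn_trans.
exact: iota_ltn_sorted.
Qed.

Lemma mem_blist B v : (v \in blist B) = (v < W * W) && B v.
Proof. by rewrite /blist mem_rev mem_filter mem_iota add0n andbC. Qed.

Lemma sumn_blist B : sumn (blist B) = bsum B.
Proof.
rewrite /blist /bsum sumn_rev sumnE big_filter big_mkcond /index_iota subn0.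
by apply: eq_bigr => v _; case: (B v); rewrite ?mul1n ?mul0n.
Qed.

Lemma size_blist B : size (blist B) = bcount B.
Proof.
rewrite /blist /bcount size_rev size_filter -sum1_count big_mkcond /index_iota subn0.
by apply: eq_bigr => v _; case: (B v).
Qed.

Definition lcount (B : pred nat) k := \sum_(0 <= r < W) B (k * W + r).

Definition lsum (B : pred nat) k := \sum_(0 <= r < W) B (k * W + r) * r.

Lemma sum_levels (F : nat -> nat) K :
  \sum_(0 <= v < K * W) F v = \sum_(0 <= k < K) \sum_(0 <= r < W) F (k * W + r).
Proof.
elim: K => [|K IH]; first by rewrite !big_geq.
rewrite [RHS]big_nat_recr //= -IH (@big_cat_nat _ _ _ (K * W)) ?leq_mul2r ?leqnSn ?orbT //=.
congr (_ + _); rewrite -{1}(add0n (K * W)) big_addn mulSn addnK.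
by apply: eq_bigr => r _; rewrite addnC.
Qed.

Lemma bcount_levels B : bcount B = \sum_(0 <= k < W) lcount B k.
Proof. exact: sum_levels. Qed.

Lemma bsum_levels B : bsum B = \sum_(0 <= k < W) (k * W * lcount B k + lsum B k).
Proof.
rewrite /bsum sum_levels; apply: eq_bigr => k _.
rewrite /lcount /lsum big_distrr -big_split /=; apply: eq_bigr => r _.
by case: (B _); rewrite ?mul1n ?mul0n ?muln1 ?muln0.
Qed.

Lemma lcount_gt0_ex B k : 0 < lcount B k -> exists2 r, r < W & B (k * W + r).
Proof.
rewrite lt0n sum_nat_seq_neq0 => /hasP [r]; rewrite mem_index_iota => /andP [_ rW].
by rewrite eqb0 negbK; exists r.
Qed.

(* For an optimal set, level [k] is the residue interval [[bottom B k, top k]]. *)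
Definition bottom (B : pred nat) k := (top k).+1 - lcount B k.

Definition justified (B : pred nat) v := bottom B (v %/ W) <= v %% W <= top (v %/ W).

Lemma justified_level B k r : r < W -> justified B (k * W + r) = (bottom B k <= r <= top k).
Proof. by move=> rW; rewrite /justified divnMDl // modnMDl divn_small // modn_small // addn0. Qed.

(* [bsum B - 'C(bcount B, 2)] is the size of the partition with beta-set [B]
   ([sumn_beta]); optimality compares these sizes without subtraction. *)
Definition optimal (B : pred nat) := sss_closed B /\
  forall B', sss_closed B' -> bsum B' + 'C(bcount B, 2) <= bsum B + 'C(bcount B', 2).

Lemma optimal_add B y : optimal B -> y < W * W -> ~~ B y ->
  sss_closed (fun v => B v || (v == y)) -> y <= bcount B.
Proof.
move=> [_ opt] yM By /(opt (fun v => B v || (v == y))).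
rewrite /bsum /bcount big_nat_add1 // big_nat_count_add1 // addn1 binS bin1; lia.
Qed.

Lemma optimal_exchange B x y : optimal B -> x < y -> y < W * W -> B x -> ~~ B y ->
  ~ sss_closed (fun v => (B v && (v != x)) || (v == y)).
Proof.
move=> [_ opt] xy yM Bx By; set B1 := fun v => B v && (v != x).
have B1E v : B v = B1 v || (v == x) by rewrite /B1; case: eqVneq => [->|]; rewrite ?Bx ?andbT ?orbF.
have B1x : ~~ B1 x by rewrite /B1 eqxx andbF.
have B1y : ~~ B1 y by rewrite /B1 (negbTE By).
have xM : x < W * W by lia.
have sumB : bsum B = bsum B1 + x.
  by rewrite /bsum -(big_nat_add1 id xM B1x); apply: eq_bigr => v _; rewrite B1E.
have countB : bcount B = bcount B1 + 1.
  by rewrite /bcount -(big_nat_count_add1 xM B1x); apply: eq_bigr => v _; rewrite B1E.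
move=> /(opt (fun v => B1 v || (v == y))).
rewrite sumB countB /bsum /bcount big_nat_add1 // big_nat_count_add1 // -/(bsum B1) -/(bcount B1).
lia.
Qed.

Hypothesis s_gt0 : 0 < s.

Lemma sss_closed_level B h : sss_closed B -> B h -> exists k r, h = k * W + r /\ 0 < r <= top k.
Proof.
case=> B0 Bs Bs1 shift; elim/ltn_ind: h => h IH hB.
case: (ltnP h W) => hW.
  have : [&& h != 0, h != s & h != s.+1].
    by apply/and3P; split; apply/eqP => E; rewrite E ?(negbTE B0) ?(negbTE Bs) ?(negbTE Bs1) in hB.
  by exists 0, h; rewrite /top; lia.
rewrite -(subnK hW) in IH hB *; set h' := h - W in IH hB *.
have hB0 := shift h' 0 isT hB; rewrite addn0 in hB0.
have [k [r [Eh' r_top]]] := IH h' (ltac:(lia)) hB0.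
have [k' [r' [E r'_top]]] := IH (h' + 2) (ltac:(lia)) (shift h' 2 isT hB).
have rW : r + 2 < W by rewrite /top in r_top; lia.
have r'W : r' < W by rewrite /top in r'_top; lia.
rewrite Eh' -addnA in E; have [Ek Er] := level_eq rW r'W E.
by exists k.+1, r; rewrite Eh' mulSn; split; rewrite /top in r_top r'_top *; lia.
Qed.

Lemma level_residue B k r : sss_closed B -> r < W -> B (k * W + r) -> 0 < r <= top k.
Proof.
move=> closedB rW hB; have [k' [r' [E r'_top]]] := sss_closed_level closedB hB.
have r'W : r' < W by rewrite /top in r'_top; lia.
by have [-> ->] := level_eq rW r'W E.
Qed.

Lemma sss_closed_bound B h : sss_closed B -> B h -> h < W * W.
Proof.
move=> closedB hB; have [k [r [-> r_top]]] := sss_closed_level closedB hB.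
have : k.+1 * W <= W * W by rewrite leq_mul2r; rewrite /top in r_top; lia.
by rewrite mulSn; rewrite /top in r_top; lia.
Qed.

Lemma lcount_bound B k : sss_closed B ->
  [/\ lcount B k <= top k, lsum B k + 'C(lcount B k, 2) <= lcount B k * top k &
   lsum B k + 'C(lcount B k, 2) = lcount B k * top k ->
     forall r, r < W -> B (k * W + r) = (bottom B k <= r <= top k)].
Proof.
move=> closedB; have topW : top k < W by rewrite /top; lia.
exact: residue_sum_bound topW (fun r rW => level_residue closedB rW) _ (erefl _).
Qed.

Lemma bottom_gt0 B k : sss_closed B -> 0 < bottom B k.
Proof. by move=> closedB; have [bound _ _] := lcount_bound k closedB; rewrite /bottom; lia. Qed.

Lemma lcount_gt0E B k : sss_closed B -> (0 < lcount B k) = (bottom B k <= top k).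
Proof. by move=> closedB; have [bound _ _] := lcount_bound k closedB; rewrite /bottom; lia. Qed.

(* Each element of level [k.+1] lies above one of level [k], and the largest one
   also lies above the two residues following it. *)
Lemma lcount_succ B k : sss_closed B -> 0 < lcount B k.+1 -> lcount B k.+1 + 2 <= lcount B k.
Proof.
move=> closedB /lcount_gt0_ex exr.
have exM : exists r, (r < W) && B (k.+1 * W + r) by case: exr => r rW hB; exists r; rewrite rW.
have ubM r : (r < W) && B (k.+1 * W + r) -> r <= W by case/andP => /ltnW.
case: (ex_maxnP exM ubM) => m /andP [mW Bm] m_max.
have /andP [_ m_top] := level_residue closedB mW Bm.
have m1W : m.+1 < W by rewrite /top in m_top; lia.
have m2W : m.+2 < W by rewrite /top in m_top; lia.
have m1 : ~~ B (k.+1 * W + m.+1).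
  by apply/negP => hB; have := m_max m.+1; rewrite m1W hB => /(_ isT); lia.
have m2 : ~~ (B (k.+1 * W + m.+2) || (m.+2 == m.+1)).
  by rewrite gtn_eqF // orbF; apply/negP => hB; have := m_max m.+2; rewrite m2W hB => /(_ isT); lia.
have extend : \sum_(0 <= r < W) ((B (k.+1 * W + r) || (r == m.+1)) || (r == m.+2))
    = lcount B k.+1 + 2.
  by rewrite big_nat_count_add1 // big_nat_count_add1 // -addnA.
rewrite -extend; apply: leq_sum => r _.
case: (boolP (B (k.+1 * W + r))) => [/(level_shift (d := 0) closedB isT) | _ /=].
  by rewrite addn0 => ->.
case: eqVneq => [-> /= | _ /=].
  by have := level_shift (d := 1) closedB isT Bm; rewrite addn1 => ->.
by case: eqVneq => [->|] //=; have := level_shift (d := 2) closedB isT Bm; rewrite addn2 => ->.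
Qed.

Lemma bottom_mono B k k' : sss_closed B -> k <= k' -> 0 < lcount B k' ->
  0 < lcount B k /\ bottom B k <= bottom B k'.
Proof.
move=> closedB /subnKC <-; elim: (k' - k) => [|d IH]; first by rewrite addn0.
rewrite addnS => /(lcount_succ closedB) next; have [pos le] := IH (ltac:(lia)).
have [bound _ _] := lcount_bound (k + d).+1 closedB.
by split=> //; move: le next bound; rewrite /bottom /top; lia.
Qed.

Lemma lcount_eq0_mono B L k : sss_closed B -> lcount B L = 0 -> L <= k -> lcount B k = 0.
Proof.
move=> closedB nL Lk; apply/eqP; rewrite -leqn0 leqNgt; apply/negP.
by case/(bottom_mono closedB Lk); rewrite nL.
Qed.

Lemma lcount_justified B k : sss_closed B ->
  lcount (justified B) k = lcount B k /\
  lsum (justified B) k + 'C(lcount B k, 2) = lcount B k * top k.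
Proof.
move=> closedB; have [bound _ _] := lcount_bound k closedB.
have topW : top k < W by rewrite /top; lia.
have [count_eq sum_eq] := interval_sums bound topW.
split; [rewrite -[RHS]count_eq | rewrite -[RHS]sum_eq; congr (_ + _)];
  by apply: eq_big_nat => r /andP [_ rW]; rewrite justified_level.
Qed.

Lemma justified_sss_closed B : sss_closed B -> sss_closed (justified B).
Proof.
move=> closedB; have b_gt0 k := bottom_gt0 k closedB.
split.
- by rewrite -[0]/(0 * W + 0) justified_level //; have := b_gt0 0; lia.
- by rewrite -[s]/(0 * W + s) justified_level // /top; lia.
- by rewrite -[s.+1]/(0 * W + s.+1) justified_level // /top; lia.
move=> h d d2; rewrite (divn_eq h W) -addnA [_ %% W + _]addnC addnA -mulSnr.
set k := h %/ W; set r := h %% W; have rW : r < W by apply: ltn_pmod.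
rewrite justified_level // => /andP [bot top_r].
have level_pos : 0 < lcount B k.+1 by move: bot top_r; rewrite /bottom; lia.
have [_ mono] := bottom_mono closedB (leqnSn k) level_pos.
rewrite -addnA justified_level; last by move: top_r (b_gt0 k.+1); rewrite /top; lia.
by move: bot top_r mono (b_gt0 k.+1); rewrite /top; lia.
Qed.

(* Justifying every level preserves closedness and the level counts while not
   decreasing the residue sums, so an optimal set is already justified. *)
Lemma optimal_justified B k r : optimal B -> r < W ->
  B (k * W + r) = (bottom B k <= r <= top k).
Proof.
move=> [closedB opt] rW; set J := justified B.
have count_J : bcount J = bcount B.
  by rewrite !bcount_levels; apply: eq_bigr => k' _; case: (lcount_justified k' closedB).
have lsum_le k' : lsum B k' <= lsum J k'.
  have [_ bound _] := lcount_bound k' closedB; have [_ sum_eq] := lcount_justified k' closedB.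
  by rewrite -(leq_add2r 'C(lcount B k', 2)) sum_eq.
have sum_J : bsum J = bsum B + \sum_(0 <= k' < W) (lsum J k' - lsum B k').
  rewrite !bsum_levels -big_split /=; apply: eq_bigr => k' _.
  by have [-> _] := lcount_justified k' closedB; have := lsum_le k'; lia.
have := opt J (justified_sss_closed closedB); rewrite count_J sum_J => J_le.
have /eqP : \sum_(0 <= k' < W) (lsum J k' - lsum B k') = 0 by lia.
rewrite sum_nat_seq_eq0 => /allP lsum_eq.
have [bound _ eq_case] := lcount_bound k closedB.
case: (ltnP k W) => kW.
  have := lsum_eq k; rewrite mem_index_iota kW => /(_ isT); rewrite implyTb subn_eq0 => J_le'.
  have [_ sum_eq] := lcount_justified k closedB.
  apply: eq_case r rW; rewrite -sum_eq; congr (_ + _).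
  by apply/eqP; rewrite eqn_leq lsum_le.
have -> : B (k * W + r) = false.
  apply/negP => /(sss_closed_bound closedB); rewrite ltnNge.
  by move/negP; apply; apply: leq_trans (leq_mul kW (leqnn W)) (leq_addr _ _).
by move: bound; rewrite /bottom /top; lia.
Qed.

Lemma bcount_le B L : sss_closed B -> L <= s -> lcount B L = 0 -> bcount B <= L * (s - 1).
Proof.
move=> closedB Ls nL; rewrite bcount_levels (@big_cat_nat _ _ _ L) //=; last by lia.
rewrite [X in _ + X]big1_seq ?addn0; last first.
  by move=> k /andP [_]; rewrite mem_index_iota => /andP [/(lcount_eq0_mono closedB nL)].
rewrite -{2}[L]subn0 -sum_nat_const_nat; apply: leq_sum => k _.
by have [bound _ _] := lcount_bound k closedB; move: bound; rewrite /top; lia.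
Qed.

Section Optimal.
Variable B : pred nat.
Hypothesis B_opt : optimal B.
Let closedB : sss_closed B := B_opt.1.
Local Notation n := (lcount B).
Local Notation b := (bottom B).
Let optimalE k r : r < W -> B (k * W + r) = (b k <= r <= top k) :=
  @optimal_justified B k r B_opt.

(* Otherwise [L * W + top L] could be added to [B], and it exceeds [bcount B]. *)
Lemma empty_level_top L : n L = 0 -> 0 < top L -> 0 < L /\ top L < b L.-1.
Proof.
move=> nL topL; apply/andP; apply: contraT; rewrite negb_and -leqNgt => below.
set y := L * W + top L.
have topW : top L < W by rewrite /top; lia.
have yM : y < W * W.
  have : L.+1 * W <= W * W by rewrite leq_mul2r; rewrite /top in topL; lia.
  by rewrite mulSnr /y; lia.
have By : ~~ B y by rewrite optimalE // /bottom nL; lia.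
have Ls : L <= s by rewrite /top in topL; lia.
have := bcount_le closedB Ls nL.
have closedBy : sss_closed (fun v => B v || (v == y)).
  have [B0 Bs Bs1 shift] := closedB.
  have yW : (L == 0) || (W <= y) by rewrite /y; nia.
  split; [rewrite negb_or B0 | rewrite negb_or Bs | rewrite negb_or Bs1 | ].
  - by move: yW; rewrite /y /top in topL *; lia.
  - by move: yW; rewrite /y /top in topL *; lia.
  - by move: yW; rewrite /y /top in topL *; lia.
  move=> h d d2 /orP [/(shift h d d2) -> // | /eqP hy].
  have L0 : 0 < L by move: hy; rewrite /y /top in topL *; lia.
  have hE : h + d = L.-1 * W + (top L + d).
    by move: hy; rewrite /y -{1}(prednK L0) mulSnr; lia.
  rewrite hE optimalE; last by rewrite /top in topL *; lia.
  by move: below; rewrite /top in topL *; lia.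
by have := optimal_add B_opt yM By closedBy; rewrite /y; nia.
Qed.

(* If level [p.+1] starts above level [p], no element of [B] needs the bottom
   element of level [p] in order to be closed. *)
Lemma bottom_uncovered p h d : b p < b p.+1 -> d <= 2 -> B (h + W) -> h + d != p * W + b p.
Proof.
move=> bp d2 hB; apply/eqP => hd.
have [k [r [hE /andP [r0 r_top]]]] := sss_closed_level closedB hB.
have rW : r < W by rewrite /top in r_top; lia.
have k0 : 0 < k by move: hE; case: k {r_top} => [|k]; lia.
have lvl : k.-1 * W + (r + d) = p * W + b p.
  by rewrite -hd; move: hE; rewrite -{1}(prednK k0) mulSnr; lia.
have bpW : b p < W by move: bp; rewrite /bottom /top; lia.
have rdW : r + d < W by rewrite /top in r_top; lia.
have [kp rd] := level_eq rdW bpW lvl.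
move: hB; rewrite hE optimalE // -(prednK k0) kp.
by move: bp rd; lia.
Qed.

(* Moving the bottom element of level [p] to just below the bottom of level
   [q.+1] would keep [B] closed and increase its sum. *)
Lemma no_bottom_jump p q : p <= q -> 0 < n q.+1 -> b p < b p.+1 ->
  b q <= (b p).+1 < b q.+1 -> False.
Proof.
move=> pq nq bp /andP [bq bq1].
have [np _] := bottom_mono closedB (leqW pq) nq.
have := lcount_gt0E q.+1 closedB; rewrite nq => /esym top_q1.
have top_q : top q = top q.+1 + 2 by move: top_q1 (bottom_gt0 q.+1 closedB); rewrite /top; lia.
set x := p * W + b p; set y := q.+1 * W + (b p).+1.
have bp_top : b p <= top p by rewrite -(lcount_gt0E p closedB).
have bpW : (b p).+1 < W by move: bp_top; rewrite /top; lia.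
have Bx : B x by rewrite /x optimalE ?leqnn ?bp_top //; lia.
have By : ~~ B y by rewrite /y optimalE //; lia.
have xy : x < y by rewrite /x /y mulSnr; have := leq_mul pq (leqnn W); lia.
have yM : y < W * W.
  have : q.+2 * W <= W * W.
    by rewrite leq_mul2r; move: top_q1 (bottom_gt0 q.+1 closedB); rewrite /top; lia.
  by rewrite /y mulSnr; lia.
apply: (optimal_exchange B_opt xy yM Bx By).
have [B0 Bs Bs1 shift] := closedB.
have yW : W <= y by rewrite /y mulSnr; lia.
split; [rewrite (negbTE B0) | rewrite (negbTE Bs) | rewrite (negbTE Bs1) | ]; rewrite /=; try lia.
move=> h d d2 /orP [/andP [hB _] | /eqP hy].
  by rewrite (shift h d d2 hB) /x (bottom_uncovered bp d2 hB).
have hE : h + d = q * W + ((b p).+1 + d) by move: hy; rewrite /y mulSnr; lia.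
have topW : top q < W by rewrite /top; lia.
have rW : (b p).+1 + d < W by lia.
rewrite hE optimalE // (_ : b q <= _ <= top q) /=; last by lia.
by apply/orP; left; apply/eqP => /(level_eq rW (ltnW bpW)) [_]; lia.
Qed.

Section Shape.
Variables L p0 : nat.
Hypotheses (L_empty : n L = 0) (L_first : forall k, k < L -> 0 < n k).
Hypotheses (p0L : p0 < L) (b_p0 : b p0 = b 0).
Hypothesis p0_last : forall k, p0 < k < L -> b k != b 0.

Lemma bottom_le k : k < L -> b k <= (b 0).+1.
Proof.
elim: k => [|k IH] kL; first exact: leqnSn.
case: (ltnP k p0) => [kp0 | p0k].
  by have [_] := bottom_mono closedB (kp0 : k.+1 <= p0) (L_first p0L); lia.
rewrite leqNgt; apply/negP => big.
have p01L : p0.+1 < L by lia.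
have [_ mono] := bottom_mono closedB (leq0n p0.+1) (L_first p01L).
have ne : b p0.+1 != b 0 by apply: p0_last; rewrite ltnSn.
apply: (no_bottom_jump p0k (L_first kL)); first by move: mono ne; rewrite b_p0; lia.
by rewrite b_p0 (IH (ltnW kL)).
Qed.

Lemma bottom_shape k : k < L -> b k = b 0 + (p0 < k).
Proof.
move=> kL; have [_ mono0] := bottom_mono closedB (leq0n k) (L_first kL).
case: (ltnP p0 k) => p0k /=.
  have ne : b k != b 0 by apply: p0_last; rewrite p0k.
  by have := bottom_le kL; lia.
by have [_] := bottom_mono closedB p0k (L_first p0L); lia.
Qed.

Lemma optimal_level k r : r < W ->
  B (k * W + r) = (b 0 < r <= top k) || ((r == b 0) && (k < p0.+1)).
Proof.
move=> rW; rewrite optimalE //; case: (ltnP k L) => kL.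
  have := lcount_gt0E k closedB; rewrite L_first // bottom_shape // => /esym.
  by case: (ltnP p0 k); lia.
have nk := lcount_eq0_mono closedB L_empty kL.
have topk : top k <= top L by rewrite /top; lia.
have topL : top L <= b 0.
  case: (posnP (top L)) => [-> // | topL].
  have [L0 topL'] := empty_level_top L_empty topL.
  by move: topL'; rewrite bottom_shape; [case: (p0 < L.-1) => /=; lia | lia].
have -> : b k = (top k).+1 by rewrite /bottom nk subn0.
lia.
Qed.

End Shape.

End Optimal.

End SssClosed.

Lemma optimal_in_beta s B : 1 < s -> optimal s B -> exists i j,
  [/\ 1 <= i <= s - 1, j <= (s - i + 1)./2 & forall v, B v = in_beta s i j v].
Proof.
move=> s_gt1 B_opt; have s_gt0 := ltnW s_gt1; have closedB := B_opt.1.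
set b := bottom s B.
have b_gt0 k : 0 < b k := bottom_gt0 s_gt0 k closedB.
have n_gt0E k : (0 < lcount s B k) = (b k <= top s k) := lcount_gt0E s_gt0 k closedB.
have exL : exists k, lcount s B k == 0.
  by exists s; have [bound _ _] := lcount_bound s_gt0 s closedB; rewrite /top in bound; lia.
case: (ex_minnP exL) => L /eqP L_empty L_min.
have L_first k : k < L -> 0 < lcount s B k.
  by move=> kL; rewrite lt0n; apply/negP => /L_min; lia.
have L0 : 0 < L.
  rewrite lt0n; apply/eqP => L0; have top0 : 0 < top s L by rewrite L0 /top; lia.
  by have [] := empty_level_top s_gt0 B_opt L_empty top0; rewrite L0.
have exp : exists k, (k < L) && (b k == b 0) by exists 0; rewrite L0 eqxx.
have ubp k : (k < L) && (b k == b 0) -> k <= L by case/andP => /ltnW.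
case: (ex_maxnP exp ubp) => p0 /andP [p0L /eqP b_p0] p0_max.
have p0_last k : p0 < k < L -> b k != b 0.
  case/andP => p0k kL; apply/negP => /eqP bk.
  by have := p0_max k; rewrite kL bk eqxx => /(_ isT); lia.
have := L_first 0 L0; have := L_first p0 p0L; rewrite !n_gt0E b_p0 => np0 n0.
exists (b 0), p0.+1; split.
- by have := b_gt0 0; rewrite /top in n0; lia.
- by have := b_gt0 0; rewrite /top in np0; lia.
move=> v; have bW : b 0 < s.+2 by rewrite /top in n0; lia.
rewrite (divn_eq v s.+2) (optimal_level s_gt0 B_opt L_empty L_first p0L b_p0 p0_last) ?ltn_pmod //.
by rewrite in_beta_level // ltn_pmod.
Qed.

Lemma sss_core_closed s la : is_partition la -> is_sss_core s la -> sss_closed s (mem (beta la)).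
Proof.
move=> la_part /and3P [core_s core_s1 core_s2]; apply/sss_closedP; split.
- by apply/negP => /(beta_gt0 la_part).
- exact: core_beta_closed.
- exact: core_beta_closed.
- exact: core_beta_closed.
Qed.

Lemma sss_core_beta_bound s la v : 0 < s -> is_partition la -> is_sss_core s la ->
  v \in beta la -> 0 < v < s.+2 * s.+2.
Proof.
move=> s_gt0 la_part la_core vB; rewrite (beta_gt0 la_part vB).
exact: sss_closed_bound s_gt0 _ _ (sss_core_closed la_part la_core) vB.
Qed.

Lemma blist_sss_core s la : 0 < s -> is_partition la -> is_sss_core s la ->
  blist s (mem (beta la)) = beta la.
Proof.
move=> s_gt0 la_part la_core.
apply: (irr_sorted_eq gtn_trans gtn_irr (blist_sorted _ _) (beta_sorted la_part)) => v.
rewrite mem_blist; apply/andP/idP => [[_ vB] // | vB]; split=> //.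
by have /andP [_ ->] := sss_core_beta_bound s_gt0 la_part la_core vB.
Qed.

Lemma sss_closed_core s B : 0 < s -> sss_closed s B ->
  exists mu, [/\ is_partition mu, is_sss_core s mu & psize mu + 'C(bcount s B, 2) = bsum s B].
Proof.
move=> s_gt0 closedB; set l := blist s B.
have l_gt0 : all (fun x => 0 < x) l.
  apply/allP => v; rewrite mem_blist => /andP [_ Bv]; rewrite lt0n.
  by apply: contraTneq Bv => ->; case: closedB.
have mu_part := partition_of_beta_partition (blist_sorted s B) l_gt0.
have beta_mu := beta_partition_of_beta (blist_sorted s B) l_gt0.
exists (partition_of_beta l); split=> //.
  have [_ Cs Cs1 Cs2] := (sss_closedP s B).1 closedB.
  have closed_l t : sub_closed t B -> sub_closed t (mem (beta (partition_of_beta l))).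
    move=> Ct h; rewrite beta_mu /= mem_blist => /andP [hM hB] th.
    by have [th' Bht] := Ct h hB th; rewrite mem_blist Bht andbT; split=> //; lia.
  by apply/and3P; split; apply: beta_closed_core => //; apply: closed_l.
by rewrite -sumn_blist -size_blist -beta_mu sumn_beta size_beta.
Qed.

Lemma max_sss_core_optimal s la : 0 < s -> is_partition la -> is_sss_core s la ->
  (forall mu, is_partition mu -> is_sss_core s mu -> psize mu <= psize la) ->
  optimal s (mem (beta la)).
Proof.
move=> s_gt0 la_part la_core la_max; split=> [|B closedB]; first exact: sss_core_closed.
have [mu [mu_part mu_core <-]] := sss_closed_core s_gt0 closedB.
rewrite -(sumn_blist s (mem (beta la))) -(size_blist s (mem (beta la))).
rewrite blist_sss_core // sumn_beta size_beta.
by have := la_max mu mu_part mu_core; lia.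
Qed.

Lemma eq_beta_list s i j l : sorted gtn l -> (forall v, (v \in l) = in_beta s i j v) ->
  (forall v, v \in l -> 0 < v < s.+2 * s.+2) -> l = beta_list s i j.
Proof.
move=> l_sorted l_mem l_bound.
apply: (irr_sorted_eq gtn_trans gtn_irr l_sorted).
  rewrite /beta_list rev_sorted; apply: sorted_filter; first exact: ltn_trans.
  exact: iota_ltn_sorted.
move=> v; rewrite /beta_list mem_rev mem_filter mem_iota -l_mem addn2.
by case: (boolP (v \in l)) => // /l_bound; rewrite -mulnn; lia.
Qed.

Theorem lemma3p2 (s : nat) (la : seq nat) :
  3 <= s ->
  is_partition la -> is_sss_core s la ->
  (forall mu : seq nat, is_partition mu -> is_sss_core s mu -> psize mu <= psize la) ->
  exists i j : nat,
    [/\ 1 <= i <= s - 1, j <= (s - i + 1)./2 & la = lambda_ij s i j].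
Proof.
move=> s_ge3 la_part la_core la_max; have s_gt0 : 0 < s by lia.
have B_opt := max_sss_core_optimal s_gt0 la_part la_core la_max.
have [i [j [i_range j_range B_in_beta]]] := optimal_in_beta (ltnW s_ge3) B_opt.
exists i, j; split=> //; rewrite -(partition_of_betaK la); congr partition_of_beta.
apply: eq_beta_list (beta_sorted la_part) _ _ => v; first by rewrite -B_in_beta.
exact: sss_core_beta_bound.
Qed.
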